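(* Let $G$ be a plane graph and let $s_0,s_1$ be two distinct vertices on the outer face of $G$. Then the weak labelings of $G$ with special vertices $s_0,s_1$ are in bijection with the pairs $(X,X^* )$, where $X$ is a $2$-orientation of $G$ and $X^*$ is a $2^*$-orientation of the split-dual $G^*_s$.
   Context: An angle of a plane graph is an incidence of a vertex with a face, i.e. a corner of a face at a vertex (between two consecutive edges in the rotation at the vertex). A weak labeling of a plane graph $G$ is a map from the angles of $G$ to $\{0,1\}$ such that: (G0) there are two special vertices $s_0,s_1$ on the outer face with all angles at $s_i$ labeled $i$; (G1) for each vertex $v\notin\{s_0,s_1\}$ the labels around $v$ form one non-empty cyclic interval of $1$s and one non-empty cyclic interval of $0$s; (G2) for each edge, the two labels on the two sides of the edge coincide at one endpoint and differ at the other; (G3) for each face (including the outer face), its labels, read cyclically along the face, form one non-empty interval of $1$s and one non-empty interval of $0$s. A $2$-orientation of $G$ (with respect to $s_0,s_1$) is an orientation of the edges in which every vertex other than $s_0,s_1$ has outdegree exactly $2$. The vertices $s_0,s_1$ divide the boundary of the outer face of $G$ into two arcs $A_0,A_1$. The split-dual $G^*_s$ is obtained from the dual graph $G^*$ by splitting the vertex corresponding to the outer face into two vertices $o^*_0,o^*_1$, where $o^*_i$ keeps the incidences with the dual edges of the edges of $A_i$. A $2^*$-orientation of $G^*_s$ is an orientation in which $o^*_0$ and $o^*_1$ have outdegree $1$ and every other vertex has outdegree $2$. *)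

From mathcomp Require Import all_boot all_order.
Set Implicit Arguments. Unset Strict Implicit. Unset Printing Implicit Defensive.

(* A combinatorial map: darts (half-edges), the edge involution [alpha],
   the rotation [sigma] (successor of a dart in the counterclockwise
   rotation around its vertex), vertices [vtx] with [tail d] the vertex of
   dart [d], faces [fce] with [face d] the face of dart [d], and the
   distinguished outer face.

   Conventions: the dart [d] also names the ANGLE (corner) at vertex
   [tail d] between [d] and [sigma d]; it also names one SIDE of the edge
   {d, alpha d}, namely the side lying in the angle [d].  The faces are
   the orbits of [phi d = alpha (sigma d)]; reading the face containing
   angle [d] cyclically gives angles d, phi d, phi^2 d, ...; the edge side
   [x] lies between the angles [finv phi x] and [x] on that walk. *)
Record pgraph := PGraph {
  vtx : finType;
  dart : finType;
  fce : finType;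
  tail : dart -> vtx;
  alpha : dart -> dart;
  sigma : dart -> dart;
  face : dart -> fce;
  outer : fce
}.

Definition phi (G : pgraph) (d : dart G) : dart G := alpha (sigma d).

(* G is a connected simple plane graph (genus 0 map, via Euler's formula). *)
Definition is_plane_graph (G : pgraph) : Prop :=
  [/\ (forall d : dart G, alpha (alpha d) = d /\ alpha d != d),
      injective (@sigma G),
      (forall d d' : dart G, tail d = tail d' <-> fconnect (@sigma G) d d')
        /\ (forall v : vtx G, exists d, tail d = v),
      (forall d d' : dart G, face d = face d' <-> fconnect (@phi G) d d')
        /\ (forall f : fce G, exists d, face d = f)
   & [/\ (forall d d' : dart G,
            connect (fun x y => (y == sigma x) || (y == alpha x)) d d'),
         #|vtx G| + #|fce G| = #|dart G| %/ 2 + 2,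
         (forall d : dart G, tail d != tail (alpha d))
       & (forall d d' : dart G, tail d = tail d' ->
            tail (alpha d) = tail (alpha d') -> d = d')]].

Definition two_intervals (s : seq bool) : Prop :=
  exists k a b, 0 < a /\ 0 < b /\ rot k s = nseq a true ++ nseq b false.

(* Weak labeling with special vertices s0, s1 (labels: false = 0, true = 1). *)
Definition weak_labeling (G : pgraph) (s0 s1 : vtx G) (l : dart G -> bool) : Prop :=
  [/\ (forall d, tail d = s0 -> l d = false) /\
               (forall d, tail d = s1 -> l d = true),
      (forall d, tail d <> s0 -> tail d <> s1 ->
                  two_intervals (map l (orbit (@sigma G) d))),
      (* G2 : at endpoint tail d the two sides of edge d are the angles
         d and (finv sigma d) *)
               (forall d, (l d == l (finv (@sigma G) d))
                            != (l (alpha d) == l (finv (@sigma G) (alpha d))))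
    & (forall d, two_intervals (map l (orbit (@phi G) d)))].

(* Orientations: o d = true means the edge of d is directed away from tail d. *)
Definition is_orientation (G : pgraph) (o : dart G -> bool) : Prop :=
  forall d, o (alpha d) = ~~ o d.

Definition two_orientation (G : pgraph) (s0 s1 : vtx G) (o : dart G -> bool) : Prop :=
  is_orientation o /\
  forall v : vtx G, v != s0 -> v != s1 ->
    #|[set d : dart G | (tail d == v) && o d]| = 2.

(* Arcs of the outer face: for an edge side x on the outer face, walk
   forward along the face (angles x, phi x, ...) to the first angle at a
   special vertex.  If it is at s1, the side is on the arc A0 (from s0 to
   s1); if it is at s0, the side is on the arc A1. *)
Definition next_special (G : pgraph) (s0 s1 : vtx G) (x : dart G) : dart G :=
  let s := orbit (@phi G) x in
  nth x s (find (fun y => (tail y == s0) || (tail y == s1)) s).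

(* Vertex of the split dual G*_s at which the dual edge of edge d has its
   end on the side d: inl f for an inner face f, inr false = o*_0,
   inr true = o*_1. *)
Definition dvert (G : pgraph) (s0 s1 : vtx G) (d : dart G) : (fce G + bool)%type :=
  if face d == outer G then inr (tail (next_special s0 s1 d) == s0)
  else inl (face d).

(* 2*-orientation of the split dual: o d = true means the dual edge of the
   edge of d is directed away from its end on side d (i.e. from dvert d). *)
Definition two_star_orientation (G : pgraph) (s0 s1 : vtx G) (o : dart G -> bool) : Prop :=
  [/\ is_orientation o,
      (forall b : bool, #|[set d : dart G | (dvert s0 s1 d == inr b) && o d]| = 1)
    & (forall f : fce G, f != outer G ->
         #|[set d : dart G | (dvert s0 s1 d == inl f) && o d]| = 2)].

(* A weak labeling l is determined by where it changes.  Put X d when the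
   labels of the two angles at tail d on either side of the dart d differ, and
   X* d when the labels of the two angles on either side of the edge side d in
   its face differ.  Then (G1) and (G3) say that every ordinary vertex and every
   face sees exactly two changes, (G2) says that X and X* are orientations, and
   the two changes on the outer face lie one on each arc A_0, A_1 because the
   labels at s_0 and s_1 differ.  Two labelings with the same changes differ by
   a function invariant under both rotations, hence constant on the connected
   map, hence zero since both vanish at s_0.

   Conversely, given orientations X and X* with an even number of outgoing
   darts at every vertex and face, the pair is a cocycle over F_2: Euler's
   formula makes the dimension of the cocycles match that of the coboundaries,
   so the pair comes from some labeling l.  Counting outdegrees, Euler's formula
   again forces s_0 and s_1 to have outdegree 0, so l is constant around each of
   them; normalized to 0 at s_0, it is 1 at s_1, as otherwise the single change
   on arc A_0 would contradict a parity count along the outer face. *)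

From HB Require Import structures.
From mathcomp Require Import all_boot all_order all_algebra.
From mathcomp Require Import ring zify.
Set Implicit Arguments. Unset Strict Implicit. Unset Printing Implicit Defensive.
Import GRing.Theory.

(** * Changes in cyclic boolean sequences *)

Fixpoint nchanges (x : bool) (s : seq bool) : nat :=
  if s is y :: t then (x != y) + nchanges y t else 0.

Definition cyclic_nchanges (s : seq bool) : nat :=
  if s is x :: t then nchanges x (rcons t x) else 0.

Lemma nchanges_cat x s t : nchanges x (s ++ t) = nchanges x s + nchanges (last x s) t.
Proof. by elim: s x => [|y s IHs] x //=; rewrite IHs addnA. Qed.

Lemma nchanges_rcons x s y : nchanges x (rcons s y) = nchanges x s + (last x s != y).
Proof. by rewrite -cats1 nchanges_cat /= addn0. Qed.

Lemma nchanges_nseq_cat x n s : nchanges x (nseq n x ++ s) = nchanges x s.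
Proof. by elim: n => //= n ->; rewrite eqxx. Qed.

Lemma cyclic_nchanges_rot k s : cyclic_nchanges (rot k s) = cyclic_nchanges s.
Proof.
have rot1E t : cyclic_nchanges (rot 1 t) = cyclic_nchanges t.
  case: t => [|x [|y t]] //; rewrite rot1_cons /=.
  by rewrite nchanges_rcons last_rcons addnC eq_sym.
have [kt|/ltnW/rot_oversize-> //] := leqP k (size s).
elim: k kt => [|k IHk] kt; first by rewrite rot0.
by rewrite -add1n rotD // rot1E IHk // ltnW.
Qed.

Lemma nchanges_eq0 x w : nchanges x w = 0 -> w = nseq (size w) x.
Proof.
elim: w x => [|y w IHw] x //=; case: eqP => //= <- /IHw wE.
by congr (_ :: _).
Qed.

Lemma nchanges_eq1 x w :
  nchanges x w = 1 -> exists a b, w = nseq a x ++ nseq b.+1 (~~ x).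
Proof.
elim: w x => [|y w IHw] x //=; case: (eqVneq x y) => [<-|/negPf xy] /=.
  by case/IHw => a [b ->]; exists a.+1, b.
have -> : y = ~~ x by case: x y xy => -[].
by case=> /nchanges_eq0 wE; exists 0, (size w); rewrite /= -wE.
Qed.

Lemma nchanges_eq2 x w : nchanges x w = 2 ->
  exists a b c, w = nseq a x ++ nseq b.+1 (~~ x) ++ nseq c.+1 x.
Proof.
elim: w x => [|y w IHw] x //=; case: (eqVneq x y) => [<-|/negPf xy] /=.
  by case/IHw => a [b [c ->]]; exists a.+1, b, c.
have -> : y = ~~ x by case: x y xy => -[].
by case=> /nchanges_eq1 [a [b ->]]; exists 0, a, b; rewrite negbK.
Qed.

Lemma two_intervalsE s : two_intervals s <-> cyclic_nchanges s = 2.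
Proof.
split=> [[k [[|a] [[|b] [_ [_ sE]]]]]|] //.
  rewrite -(cyclic_nchanges_rot k) sE /= rcons_cat nchanges_nseq_cat /=.
  by rewrite -cats1 nchanges_nseq_cat.
case: s => [|x t] //= /nchanges_eq2 [a [b [c tE]]].
have {}tE : x :: t = nseq a.+1 x ++ nseq b.+1 (~~ x) ++ nseq c x.
  congr (_ :: _); apply: (@rcons_injl _ x).
  by rewrite tE -[c.+1]addn1 nseqD !rcons_cat cats1.
case: x tE => tE.
  exists (size (nseq a.+1 true ++ nseq b.+1 false)), (c + a.+1), b.+1.
  split; first by rewrite addnS.
  by split=> //; rewrite tE catA rot_size_cat nseqD catA.
exists (size (nseq a.+1 false)), b.+1, (c + a.+1).
split=> //; split; first by rewrite addnS.
by rewrite tE rot_size_cat nseqD -catA.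
Qed.

Section OrbitChanges.
Variables (T : finType) (f : T -> T) (l : T -> bool).
Hypothesis f_inj : injective f.

Lemma nchanges_traject x n : nchanges (l x) (map l (traject f (f x) n)) =
  count (fun y => l y != l (finv f y)) (traject f (f x) n).
Proof. by elim: n x => [|n IHn] x //=; rewrite IHn finv_f // eq_sym. Qed.

Lemma cyclic_nchanges_orbit x : cyclic_nchanges (map l (orbit f x)) =
  #|[set y | fconnect f x y & l y != l (finv f y)]|.
Proof.
set P := fun y => l y != l (finv f y).
suff -> : cyclic_nchanges (map l (orbit f x)) = count P (orbit f x).
  rewrite -size_filter -(card_uniqP (filter_uniq _ (orbit_uniq f x))).
  by apply: eq_card => y; rewrite !inE mem_filter fconnect_orbit andbC.
rewrite /orbit; case E: (order f x) (order_gt0 f x) => [|n] // _.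
have loopE : rcons (traject f (f x) n) x = traject f (f x) n.+1.
  by rewrite trajectSr -iterSr -E iter_order.
rewrite trajectS /= -map_rcons loopE nchanges_traject -loopE -cats1 count_cat.
by rewrite addnC /= addn0.
Qed.

End OrbitChanges.

Lemma find_traject (T : Type) (f : T -> T) (P : pred T) x n k :
  k < n -> P (iter k f x) -> (forall i, i < k -> ~~ P (iter i f x)) ->
  find P (traject f x n) = k.
Proof.
elim: k x n => [|k IHk] x [|n] //=; first by move=> _ ->.
move=> kn Pk notP; rewrite (negPf (notP 0 isT)); congr _.+1.
by apply: IHk => [||i ik]; rewrite -?iterSr //; apply: notP.
Qed.

Lemma sum_card_fibers (T J : finType) (g : T -> J) (P : pred T) :
  \sum_(j : J) #|[set x | (g x == j) && P x]| = #|[set x | P x]|.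
Proof.
rewrite -sum1_card (partition_big g predT) //=; apply: eq_bigr => j _.
by rewrite -sum1_card; apply: eq_bigl => x; rewrite !inE andbC.
Qed.

Lemma sum_const_except (T : finType) (S : {set T}) (c : T -> nat) k :
  (forall v, v \notin S -> c v = k) -> \sum_v c v + k * #|S| = \sum_(v in S) c v + k * #|T|.
Proof.
move=> ck; rewrite (bigID (mem S)) /= -addnA; congr (_ + _).
rewrite (eq_bigr (fun=> k)) => [|v /ck //]; rewrite sum_nat_const mulnC -mulnDr.
by rewrite -(cardsC S) addnC; congr (k * (_ + _)); apply: eq_card => v; rewrite !inE.
Qed.

Lemma card_orientation (T : finType) (al : T -> T) (o : pred T) :
  involutive al -> (forall x, o (al x) = ~~ o x) -> #|T| = #|[set x | o x]| * 2.
Proof.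
move=> alK o_al; rewrite muln2 -addnn -[in LHS](cardsC [set x | o x]); congr (_ + _).
have -> : ~: [set x | o x] = al @: [set x | o x].
  apply/setP => x; rewrite !inE; apply/idP/imsetP => [ox|[y]].
    by exists (al x); rewrite ?inE ?o_al ?alK.
  by rewrite inE => oy ->; rewrite o_al oy.
by rewrite card_imset //; apply: can_inj alK.
Qed.

(** * Linear algebra over F_2 *)

Section DeltaCongruence.
Local Open Scope ring_scope.

Lemma sumr_eq_natr (R : pzSemiRingType) (T : finType) (P : pred T) x :
  \sum_(i | P i) ((i == x)%:R : R) = (P x)%:R.
Proof.
rewrite big_mkcond (bigD1 x) //= eqxx big1 ?addr0; first by case: (P x).
by move=> i /negPf ->; case: (P i).
Qed.

Lemma memvB_congr (K : fieldType) (vT : vectType K) (S : {vspace vT}) (a b c : vT) :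
  a - b \in S -> (a - c \in S) = (b - c \in S).
Proof. by move=> ab; rewrite -(rpredDl (b - c) ab) addrA subrK. Qed.

Variables (R : fieldType) (J : finType).

Definition delta (j : J) : {ffun J -> R^o} := [ffun k => (k == j)%:R].

Lemma ffun_delta_decomp (y : {ffun J -> R^o}) j0 :
  y = \sum_j y j *: (delta j - delta j0) + (\sum_j y j) *: delta j0.
Proof.
apply/ffunP => k; rewrite !ffunE sum_ffunE.
under eq_bigr do rewrite !ffunE scalerBr.
rewrite sumrB -scaler_suml subrK (bigD1 k) //= eqxx.
rewrite big1 ?addr0 => [|j /negPf]; first exact/esym/mulr1.
by rewrite eq_sym => ->; exact: mulr0.
Qed.

Lemma dimv_delta_congr (S : {vspace {ffun J -> R^o}}) :
  (forall j j', delta j - delta j' \in S) -> (#|J| - 1 <= \dim S)%N.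
Proof.
case: (pickP J) => [j0 _|J0] dS; last by rewrite (eq_card0 J0).
have fullS : (fullv <= S + <[delta j0]>)%VS.
  apply/subvP => y _; rewrite [y](ffun_delta_decomp _ j0).
  apply: memv_add; last exact/memvZ/memv_line.
  by apply: memv_suml => j _; apply/memvZ.
have := dimvS fullS; rewrite dimvf /dim /= muln1.
have := dimv_add_leqif S <[delta j0]>; rewrite dim_vline => -[le_dim _].
by case: (_ != 0) le_dim => /= le_dim le_full; lia.
Qed.

End DeltaCongruence.

Arguments delta {R J} j.

Local Notation F2 := 'F_2.

Section BooleansInF2.
Local Open Scope ring_scope.

Lemma pchar_F2 : 2%N \in [pchar F2].
Proof. exact: pchar_Fp. Qed.

Lemma addF2xx (x : F2) : x + x = 0.
Proof. exact: addrr_pchar2 pchar_F2 x. Qed.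

Lemma addF2_eq0 (x y : F2) : (x + y == 0) = (x == y).
Proof. by rewrite addr_eq0 (oppr_pchar2 pchar_F2). Qed.

Lemma oppF2_ffun (J : finType) (y : {ffun J -> F2^o}) : - y = y.
Proof. by apply/ffunP => j; rewrite ffunE (oppr_pchar2 pchar_F2). Qed.

Lemma F2_natr_neq0 (x : F2) : x = (x != 0)%:R.
Proof. by case: x => -[|[|//]] ? ; apply: val_inj. Qed.

Lemma natrF2_addb (a b : bool) : (a (+) b)%:R = a%:R + b%:R :> F2.
Proof. by case: a; case: b; rewrite ?addr0 ?add0r ?addF2xx. Qed.

Lemma natrF2_inj : injective (fun b : bool => b%:R : F2).
Proof. by case; case. Qed.

Lemma sumF2_natr (T : finType) (P : pred T) (a : T -> bool) :
  \sum_(i | P i) (a i)%:R = (odd #|[set i | P i && a i]|)%:R :> F2.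
Proof.
rewrite -modn2 Fp_nat_mod // -sum1_card natr_sum big_mkcond [RHS]big_mkcond /=.
by apply: eq_bigr => i _; rewrite inE; case: (P i); case: (a i).
Qed.

Lemma even_card_changes_in (T : finType) (f : T -> T) (A : pred T) (l : T -> bool) :
  injective f -> (forall x, A (f x) != A x -> l x = false) ->
  ~~ odd #|[set x | A x && (l x != l (finv f x))]|.
Proof.
move=> f_inj A_f; apply/negP => /(congr1 (fun b : bool => b%:R : F2)); rewrite -sumF2_natr.
under eq_bigr do rewrite negb_eqb natrF2_addb.
rewrite big_split /= [X in _ + X](reindex_inj f_inj) /=.
under [X in _ + X]eq_bigr do rewrite finv_f //.
suff -> : \sum_(x | A (f x)) ((l x)%:R : F2) = \sum_(x | A x) (l x)%:R.
  by rewrite addF2xx => /esym/eqP; rewrite oner_eq0.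
rewrite [LHS]big_mkcond [RHS]big_mkcond; apply: eq_bigr => x _.
by case: (eqVneq (A (f x)) (A x)) => [-> //|/A_f ->]; rewrite !if_same.
Qed.

End BooleansInF2.

(** * Cocycles of a connected map of genus 0 are coboundaries *)

Section Coboundary.
Local Open Scope ring_scope.
Variable G : pgraph.
Hypotheses (alphaK : involutive (@alpha G)) (alpha_neq : forall d : dart G, alpha d != d)
  (sigma_inj : injective (@sigma G))
  (tail_sigma : forall d : dart G, tail (sigma d) = tail d)
  (face_phi : forall d : dart G, face (phi d) = face d)
  (dart_connected : forall d d' : dart G,
     connect (fun x y => (y == sigma x) || (y == alpha x)) d d')
  (tail_surj : forall v : vtx G, exists d, tail d = v)
  (face_surj : forall f : fce G, exists d, face d = f)
  (euler : (#|vtx G| + #|fce G| = #|dart G| %/ 2 + 2)%N).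

Local Notation D := (dart G).
Local Notation fs := (finv (@sigma G)).
Local Notation fp := (finv (@phi G)).

Lemma phi_inj : injective (@phi G).
Proof. by move=> x y /(can_inj alphaK)/sigma_inj. Qed.

Lemma finv_phiE d : fp d = fs (alpha d).
Proof.
have dE : d = phi (fs (alpha d)) by rewrite /phi f_finv ?alphaK.
by rewrite {1}dE finv_f //; apply: phi_inj.
Qed.

Lemma tail_finv_sigma d : tail (fs d) = tail d.
Proof. by rewrite -[in RHS](f_finv sigma_inj d) tail_sigma. Qed.

Lemma face_finv_phi d : face (fp d) = face d.
Proof. by rewrite -[in RHS](f_finv phi_inj d) face_phi. Qed.

Lemma finv_invariant_const (T : eqType) (g : D -> T) :
  (forall d, g (fs d) = g d) -> (forall d, g (fp d) = g d) -> forall d d', g d = g d'.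
Proof.
move=> g_fs g_fp d d'.
have g_sigma x : g (sigma x) = g x by rewrite -g_fs finv_f.
have g_alpha x : g (alpha x) = g x by rewrite -g_fp finv_phiE alphaK g_fs.
have cl : closed (fun x y => (y == sigma x) || (y == alpha x)) [pred x | g x == g d].
  by move=> x y /orP[]/eqP->; rewrite !inE ?g_sigma ?g_alpha.
by have := closed_connect cl (dart_connected d d'); rewrite !inE eqxx => /esym/eqP.
Qed.

Definition vtx_change (l : D -> bool) d := l d != l (fs d).
Definition face_change (l : D -> bool) d := l d != l (fp d).

Lemma vtx_change_orientationP (l : D -> bool) : is_orientation (vtx_change l) <->
  (forall d, (l d == l (fs d)) != (l (alpha d) == l (fs (alpha d)))).
Proof.
by split=> l_or d; move: (l_or d); rewrite /vtx_change;
  case: (l d); case: (l (fs d)); case: (l (alpha d)); case: (l (fs (alpha d))).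
Qed.

Lemma orientation_face_change (l : D -> bool) :
  is_orientation (vtx_change l) -> is_orientation (face_change l).
Proof.
move=> l_or d; move: (l_or d); rewrite /vtx_change /face_change !finv_phiE alphaK.
by case: (l d); case: (l (alpha d)); case: (l (fs d)); case: (l (fs (alpha d))).
Qed.

Definition edge_rep (d : D) := (enum_rank d < enum_rank (alpha d))%N.
Local Notation edge := {d : D | edge_rep d}.

Lemma edge_rep_alpha d : edge_rep (alpha d) = ~~ edge_rep d.
Proof.
rewrite /edge_rep alphaK ltnNge leq_eqVlt val_eqE (inj_eq enum_rank_inj).
by rewrite eq_sym (negPf (alpha_neq d)).
Qed.

Definition edge_dart d := if edge_rep d then d else alpha d.

Lemma edge_rep_edge_dart d : edge_rep (edge_dart d).
Proof. by rewrite /edge_dart; case: ifPn; rewrite // edge_rep_alpha. Qed.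

Definition edge_of d : edge := exist _ (edge_dart d) (edge_rep_edge_dart d).

Lemma edge_of_val (e : edge) : edge_of (val e) = e.
Proof. by apply: val_inj; rewrite /= /edge_dart (valP e). Qed.

Lemma card_edge : #|D| = (#|{: edge}| * 2)%N.
Proof.
rewrite card_sig (card_orientation alphaK edge_rep_alpha).
by congr (_ * _)%N; apply: eq_card => d; rewrite inE.
Qed.

Lemma euler_edges : (#|vtx G| + #|fce G| = #|{: edge}| + 2)%N.
Proof. by rewrite euler card_edge mulnK. Qed.


Local Notation U := {ffun D -> F2^o}.
Local Notation W := {ffun D + D -> F2^o}.
Local Notation Y := {ffun (vtx G + fce G) + edge -> F2^o}.

Definition cobound (u : U) : W := [ffun i => match i with
  | inl d => u d + u (fs d)
  | inr d => u d + u (fp d) end].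

(* The edge components vanish on coboundaries because [fp d = fs (alpha d)]:
   the four changes across an edge telescope. *)
Definition bound (w : W) : Y := [ffun j => match j with
  | inl (inl v) => \sum_(d | tail d == v) w (inl d)
  | inl (inr f) => \sum_(d | face d == f) w (inr d)
  | inr e => w (inl (val e)) + w (inl (alpha (val e)))
             + w (inr (val e)) + w (inr (alpha (val e))) end].

Fact cobound_is_linear : linear cobound.
Proof. by move=> k u v; apply/ffunP => -[d|d]; rewrite !ffunE /=; ring. Qed.

Fact bound_is_linear : linear bound.
Proof.
move=> k u v; apply/ffunP => -[[x|x]|e]; rewrite !ffunE /=; last by ring.
all: by under eq_bigr do rewrite !ffunE; rewrite big_split /= -mulr_sumr.
Qed.

HB.instance Definition _ := GRing.isLinear.Build _ _ _ _ cobound cobound_is_linear.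
HB.instance Definition _ := GRing.isLinear.Build _ _ _ _ bound bound_is_linear.

Lemma lker_cobound : (lker (linfun cobound) <= <[[ffun=> 1] : U]>)%VS.
Proof.
apply/subvP => u; rewrite memv_ker lfunE /= => /eqP du0.
have du_eq i : cobound u i == 0 by rewrite du0 !ffunE.
have u_fs d : u (fs d) = u d by apply/esym/eqP; have := du_eq (inl d); rewrite ffunE addF2_eq0.
have u_fp d : u (fp d) = u d by apply/esym/eqP; have := du_eq (inr d); rewrite ffunE addF2_eq0.
apply/vlineP; case: (pickP D) => [d0 _|D0]; last by exists 0; apply/ffunP => d; have := D0 d.
exists (u d0); apply/ffunP => d; rewrite !ffunE (finv_invariant_const u_fs u_fp d d0).
exact/esym/mulr1.
Qed.

Lemma dim_limg_cobound : (#|D| - 1 <= \dim (limg (linfun cobound)))%N.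
Proof.
have := limg_ker_dim (linfun cobound) fullv; rewrite capfv dimvf /dim /= muln1.
have := dimvS lker_cobound; rewrite dim_vline; case: (_ != 0) => /=; lia.
Qed.

Lemma bound_cobound u : bound (cobound u) = 0.
Proof.
apply/ffunP => -[[v|f]|e]; rewrite !ffunE /=.
- under eq_bigr do rewrite ffunE; rewrite big_split /= [X in _ + X](reindex_inj sigma_inj).
  under [X in _ + X]eq_bigl do rewrite tail_sigma.
  by under [X in _ + X]eq_bigr do rewrite (finv_f sigma_inj); rewrite addF2xx.
- under eq_bigr do rewrite ffunE; rewrite big_split /= [X in _ + X](reindex_inj phi_inj).
  under [X in _ + X]eq_bigl do rewrite face_phi.
  by under [X in _ + X]eq_bigr do rewrite (finv_f phi_inj); rewrite addF2xx.
- rewrite !finv_phiE alphaK; set x := val e.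
  set a := u x; set b := u (alpha x); set c := u (fs x); set c' := u (fs (alpha x)).
  have -> : a + c + (b + c') + (a + c') + (b + c) = (a + a) + (b + b) + ((c + c) + (c' + c')).
    by ring.
  by rewrite !addF2xx.
Qed.

Lemma natr_edge_of (e : edge) d :
  (val e == d)%:R + (alpha (val e) == d)%:R = (e == edge_of d)%:R :> F2.
Proof.
case: e => x /= rx; rewrite -[_ == edge_of d]/(x == edge_dart d) /edge_dart.
case: ifPn => rd.
  suff /negPf-> : alpha x != d by rewrite addr0.
  by apply: contraTN rd => /eqP <-; rewrite edge_rep_alpha rx.
have /negPf-> : x != d by apply: contraNN rd => /eqP <-.
by rewrite add0r -{1}(alphaK d) (inj_eq (can_inj alphaK)).
Qed.

Lemma bound_delta_inl d :
  bound (delta (inl d)) = delta (inl (inl (tail d))) + delta (inr (edge_of d)).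
Proof.
apply/ffunP => -[[v|f]|e]; rewrite !ffunE /=.
- by under eq_bigr do rewrite ffunE /=; rewrite sumr_eq_natr addr0 eq_sym.
- by rewrite big1 ?addr0 // => i _; rewrite ffunE.
- by rewrite !addr0 add0r natr_edge_of.
Qed.

Lemma bound_delta_inr d :
  bound (delta (inr d)) = delta (inl (inr (face d))) + delta (inr (edge_of d)).
Proof.
apply/ffunP => -[[v|f]|e]; rewrite !ffunE /=.
- by rewrite big1 ?addr0 // => i _; rewrite ffunE.
- by under eq_bigr do rewrite ffunE /=; rewrite sumr_eq_natr addr0 eq_sym.
- by rewrite !add0r natr_edge_of.
Qed.

Local Notation Im := (limg (linfun bound)).

Lemma bound_in_limg w : bound w \in Im.
Proof. by have := memv_img (linfun bound) (memvf w); rewrite lfunE. Qed.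

Lemma delta_edge_tail d : delta (inr (edge_of d)) - delta (inl (inl (tail d))) \in Im.
Proof. by rewrite oppF2_ffun addrC -bound_delta_inl bound_in_limg. Qed.

Lemma delta_edge_face d : delta (inr (edge_of d)) - delta (inl (inr (face d))) \in Im.
Proof. by rewrite oppF2_ffun addrC -bound_delta_inr bound_in_limg. Qed.

Lemma delta_edge_congr d d' : delta (inr (edge_of d)) - delta (inr (edge_of d')) \in Im.
Proof.
pose g x := delta (inr (edge_of x)) - delta (inr (edge_of d')) \in Im.
have g_fs x : g (fs x) = g x.
  apply: memvB_congr; have := rpredB (delta_edge_tail (fs x)) (delta_edge_tail x).
  by rewrite tail_finv_sigma opprB addrA subrK.
have g_fp x : g (fp x) = g x.
  apply: memvB_congr; have := rpredB (delta_edge_face (fp x)) (delta_edge_face x).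
  by rewrite face_finv_phi opprB addrA subrK.
by have := finv_invariant_const g_fs g_fp d d'; rewrite /g subrr mem0v.
Qed.

Lemma delta_congr_limg_bound j j' : delta j - delta j' \in Im.
Proof.
have to_edge i : exists d, delta i - delta (inr (edge_of d)) \in Im.
  case: i => [[v|f]|e].
  - by have [d <-] := tail_surj v; exists d; rewrite -memvN opprB delta_edge_tail.
  - by have [d <-] := face_surj f; exists d; rewrite -memvN opprB delta_edge_face.
  - by exists (val e); rewrite edge_of_val subrr mem0v.
have [[d jd] [d' jd']] := (to_edge j, to_edge j').
by rewrite (memvB_congr _ jd) (memvB_congr _ (delta_edge_congr d d')) -memvN opprB.
Qed.

(* [\dim Im >= |V| + |F| + |E| - 1 = 2|E| + 1] by Euler's formula, and
   [\dim W = 2|D| = 4|E|]. *)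
Lemma dim_lker_bound : (\dim (lker (linfun bound)) <= #|D| - 1)%N.
Proof.
have := limg_ker_dim (linfun bound) fullv; rewrite capfv dimvf /dim /= muln1.
have := dimv_delta_congr delta_congr_limg_bound; have := card_edge; have := euler_edges.
rewrite !card_sum; move: #|vtx G| #|fce G| #|D| #|{: edge}| (\dim Im) => V F DD E I.
lia.
Qed.

Lemma limg_cobound : limg (linfun cobound) = lker (linfun bound).
Proof.
apply/eqP; rewrite eqEdim (leq_trans dim_lker_bound dim_limg_cobound) andbT.
by apply/subvP => w /memv_imgP [u _ ->]; rewrite memv_ker !lfunE /= bound_cobound.
Qed.

Lemma coboundary_exists (a b : D -> bool) :
  (forall v, ~~ odd #|[set d | (tail d == v) && a d]|) ->
  (forall f, ~~ odd #|[set d | (face d == f) && b d]|) ->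
  (forall d, a d (+) a (alpha d) = b d (+) b (alpha d)) ->
  exists l, a =1 vtx_change l /\ b =1 face_change l.
Proof.
move=> even_a even_b ab_alpha.
pose w : W := [ffun i => match i with inl d => (a d)%:R | inr d => (b d)%:R end].
have : w \in lker (linfun bound).
  rewrite memv_ker lfunE /=; apply/eqP/ffunP => -[[v|f]|e]; rewrite !ffunE /=.
  - by under eq_bigr do rewrite ffunE; rewrite sumF2_natr (negPf (even_a v)).
  - by under eq_bigr do rewrite ffunE; rewrite sumF2_natr (negPf (even_b f)).
  - by rewrite -!natrF2_addb -addbA ab_alpha addbb.
rewrite -limg_cobound => /memv_imgP [u _]; rewrite lfunE /= => wE.
exists (fun d => u d != 0); split=> d; apply: natrF2_inj => /=.
  have := congr1 (fun w : W => w (inl d)) wE; rewrite !ffunE /= => ->.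
  by rewrite /vtx_change negb_eqb natrF2_addb -!F2_natr_neq0.
have := congr1 (fun w : W => w (inr d)) wE; rewrite !ffunE /= => ->.
by rewrite /face_change negb_eqb natrF2_addb -!F2_natr_neq0.
Qed.

End Coboundary.

(** * Weak labelings and pairs of orientations *)

Section PlaneGraph.
Variables (G : pgraph) (s0 s1 : vtx G).
Hypotheses (HG : is_plane_graph G) (s01 : s0 != s1)
  (s0_outer : exists d : dart G, tail d = s0 /\ face d = outer G)
  (s1_outer : exists d : dart G, tail d = s1 /\ face d = outer G).

Local Notation D := (dart G).
Local Notation fs := (finv (@sigma G)).
Local Notation fp := (finv (@phi G)).

Lemma eq_two_orientation (X Y : D -> bool) :
  X =1 Y -> two_orientation s0 s1 X -> two_orientation s0 s1 Y.
Proof.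
move=> XY [X_or X_two]; split=> [d|v v0 v1]; first by rewrite -!XY X_or.
by rewrite -(X_two v v0 v1); apply: eq_card => d; rewrite !inE XY.
Qed.

Lemma eq_two_star_orientation (X Y : D -> bool) :
  X =1 Y -> two_star_orientation s0 s1 X -> two_star_orientation s0 s1 Y.
Proof.
move=> XY [X_or X_one X_two]; split=> [d|b|f fo]; first by rewrite -!XY X_or.
  by rewrite -(X_one b); apply: eq_card => d; rewrite !inE XY.
by rewrite -(X_two f fo); apply: eq_card => d; rewrite !inE XY.
Qed.

Lemma eq_weak_labeling (l l' : D -> bool) :
  l =1 l' -> weak_labeling s0 s1 l -> weak_labeling s0 s1 l'.
Proof.
move=> ll' [[l0 l1] G1 G2 G3]; split=> [|d|d|d].
- by split=> d td; rewrite -ll'; [apply: l0 | apply: l1].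
- by rewrite -(eq_map ll'); apply: G1.
- by rewrite -!ll'.
- by rewrite -(eq_map ll').
Qed.

Lemma alphaK : involutive (@alpha G).
Proof. by case: HG => alpha_invol _ _ _ _ d; case: (alpha_invol d). Qed.

Lemma alpha_neq (d : D) : alpha d != d.
Proof. by case: HG => alpha_invol _ _ _ _; case: (alpha_invol d). Qed.

Lemma sigma_inj : injective (@sigma G).
Proof. by case: HG. Qed.

Let phi_inj : injective (@phi G) := phi_inj alphaK sigma_inj.

Lemma tail_fconnect (d d' : D) : (tail d == tail d') = fconnect (@sigma G) d d'.
Proof. by case: HG => _ _ [tailP _] _ _; apply/eqP/idP => /tailP. Qed.

Lemma face_fconnect (d d' : D) : (face d == face d') = fconnect (@phi G) d d'.
Proof. by case: HG => _ _ _ [faceP _] _; apply/eqP/idP => /faceP. Qed.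

Lemma tail_sigma (d : D) : tail (sigma d) = tail d.
Proof. by apply/esym/eqP; rewrite tail_fconnect fconnect1. Qed.

Lemma face_phi (d : D) : face (phi d) = face d.
Proof. by apply/esym/eqP; rewrite face_fconnect fconnect1. Qed.

Lemma dart_connected (d d' : D) : connect (fun x y => (y == sigma x) || (y == alpha x)) d d'.
Proof. by case: HG => _ _ _ _ []. Qed.

Lemma tail_surj v : exists d : D, tail d = v.
Proof. by case: HG => _ _ [_ ?] _ _. Qed.

Lemma face_surj f : exists d : D, face d = f.
Proof. by case: HG => _ _ _ [_ ?] _. Qed.

Lemma euler : #|vtx G| + #|fce G| = #|D| %/ 2 + 2.
Proof. by case: HG => _ _ _ _ []. Qed.

Lemma cyclic_nchanges_vertex (l : D -> bool) d :
  cyclic_nchanges (map l (orbit (@sigma G) d)) = #|[set y | (tail y == tail d) && vtx_change l y]|.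
Proof.
rewrite (cyclic_nchanges_orbit _ sigma_inj).
by apply: eq_card => y; rewrite !inE (eq_sym (tail y)) tail_fconnect.
Qed.

Lemma cyclic_nchanges_face (l : D -> bool) d :
  cyclic_nchanges (map l (orbit (@phi G) d)) = #|[set y | (face y == face d) && face_change l y]|.
Proof.
rewrite (cyclic_nchanges_orbit _ phi_inj).
by apply: eq_card => y; rewrite !inE (eq_sym (face y)) face_fconnect.
Qed.

Definition special (d : D) := (tail d == s0) || (tail d == s1).

Definition on_arc (b : bool) (d : D) :=
  (face d == outer G) && ((tail (next_special s0 s1 d) == s0) == b).

Lemma dvert_inr b (d : D) : (dvert s0 s1 d == inr b) = on_arc b d.
Proof. by rewrite /dvert /on_arc; case: ifP. Qed.

Lemma dvert_inl f (d : D) : f != outer G -> (dvert s0 s1 d == inl f) = (face d == f).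
Proof.
move=> fo; rewrite /dvert; case: ifP => [/eqP-> | _] //=.
by apply/esym/negbTE; rewrite eq_sym.
Qed.

Lemma dvert_outer (d : D) : (dvert s0 s1 d == inl (outer G)) = false.
Proof. by rewrite /dvert; case: ifP => //= /negbT; apply: contraNF => /eqP [->]. Qed.

Lemma card_outer_split (P : pred D) : #|[set d | (face d == outer G) && P d]| =
  #|[set d | on_arc true d && P d]| + #|[set d | on_arc false d && P d]|.
Proof.
rewrite -(cardsID [set d | tail (next_special s0 s1 d) == s0]).
by congr (_ + _); apply: eq_card => d; rewrite !inE /on_arc;
  case: (face d == outer G); case: (tail _ == s0); case: (P d).
Qed.

Lemma card_on_arc_two_star (Xs : D -> bool) b :
  two_star_orientation s0 s1 Xs -> #|[set d | on_arc b d && Xs d]| = 1.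
Proof. by case=> _ Xs_one _; rewrite -(Xs_one b); apply: eq_card => d; rewrite !inE dvert_inr. Qed.

Lemma card_face_two_star (Xs : D -> bool) f :
  two_star_orientation s0 s1 Xs -> #|[set d | (face d == f) && Xs d]| = 2.
Proof.
move=> Xs2; case: (eqVneq f (outer G)) => [->|fo].
  by rewrite card_outer_split !card_on_arc_two_star.
case: Xs2 => _ _ Xs_two; rewrite -(Xs_two f fo).
by apply: eq_card => d; rewrite !inE (dvert_inl _ fo).
Qed.

Lemma next_special_iter (d : D) k : k < order (@phi G) d -> special (iter k (@phi G) d) ->
  (forall i, i < k -> ~~ special (iter i (@phi G) d)) -> next_special s0 s1 d = iter k (@phi G) d.
Proof.
by move=> kd sk nsk; rewrite /next_special /orbit (find_traject kd sk nsk) nth_traject.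
Qed.

Lemma next_special_id (d : D) : special d -> next_special s0 s1 d = d.
Proof. by move=> sd; rewrite (@next_special_iter d 0) ?order_gt0. Qed.

Lemma first_special (d : D) : face d = outer G -> exists k,
  [/\ k < order (@phi G) d, special (iter k (@phi G) d)
     & forall i, i < k -> ~~ special (iter i (@phi G) d)].
Proof.
move=> fd; have [z [tz fz]] := s0_outer.
have dz : fconnect (@phi G) d z by rewrite -face_fconnect fz fd.
have ex_k : exists k, (k < order (@phi G) d) && special (iter k (@phi G) d).
  by exists (findex (@phi G) d z); rewrite findex_max //= iter_findex // /special tz eqxx.
case: (ex_minnP ex_k) => k /andP [kd sk] k_min; exists k; split => // i ik.
by apply/negP => si; have := k_min i; rewrite si (ltn_trans ik kd) leqNgt ik => /(_ isT).
Qed.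

Lemma next_special_phi (d : D) : face d = outer G -> ~~ special d ->
  next_special s0 s1 (phi d) = next_special s0 s1 d.
Proof.
move=> fd nsd; have [k [kd sk nsk]] := first_special (etrans (face_phi d) fd).
rewrite (next_special_iter kd sk nsk); apply/esym; rewrite -iterSr.
have order_phi : order (@phi G) (phi d) = order (@phi G) d.
  by apply: order_id_cycle; apply: cycle_orbit.
rewrite order_phi in kd; apply: next_special_iter => [||[|i] // ik].
- rewrite ltn_neqAle kd andbT; apply: contraTneq sk => kE.
  by rewrite -iterSr kE (iter_order phi_inj).
- by rewrite iterSr.
- by rewrite iterSr nsk.
Qed.

Lemma on_arc_phi b (d : D) : ~~ special d -> on_arc b (phi d) = on_arc b d.
Proof.
by move=> nsd; rewrite /on_arc face_phi; case: eqP => //= /next_special_phi ->.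
Qed.

Lemma even_face_changes_on_arc (l : D -> bool) b : (forall d, special d -> l d = false) ->
  ~~ odd #|[set d | on_arc b d && face_change l d]|.
Proof.
move=> l_special; apply: even_card_changes_in phi_inj _ => d.
by case: (boolP (special d)) => [/l_special -> //|/(on_arc_phi b)->]; rewrite eqxx.
Qed.

Lemma exists_face_change_on_arc (l : D -> bool) b :
  (forall d, tail d = s0 -> l d = false) -> (forall d, tail d = s1 -> l d = true) ->
  exists d, on_arc b d && face_change l d.
Proof.
move=> l0 l1; case: (boolP [exists d, on_arc b d && face_change l d]) => [/existsP //|].
move=> /existsPn no_change.
have l_special d : special d -> (tail d == s0) = ~~ l d.
  case/orP => /eqP td; first by rewrite td eqxx l0.
  by rewrite td l1 // eq_sym (negPf s01).
have [y [ty fy]] : exists y, tail y = (if b then s0 else s1) /\ face y = outer G.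
  by case: (b).
have [z [tz fz]] : exists z, tail z = (if b then s1 else s0) /\ face z = outer G.
  by case: (b).
have sy : special y by rewrite /special ty; case: (b); rewrite eqxx ?orbT.
have ly : l y = ~~ b by case: (b) ty => ty; [apply: l0 | apply: l1].
have lz : l z = b by case: (b) tz => tz; [apply: l1 | apply: l0].
(* Without a change on A_b, walking backwards from [y] keeps to A_b with label
   [~~ b] until it reaches [z], which is labeled [b]. *)
have back k : on_arc b (iter k fp y) && (l (iter k fp y) == ~~ b).
  elim: k => [|k /andP [arc_k lk]] /=.
    by rewrite /on_arc next_special_id // fy eqxx l_special // ly negbK !eqxx.
  set x := iter k fp y in arc_k lk *.
  have lx : l (fp x) = l x by have := no_change x; rewrite arc_k negbK => /eqP.
  rewrite lx lk andbT; case: (boolP (special (fp x))) => [sx|nsx].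
    have /andP [fx _] := arc_k.
    rewrite /on_arc next_special_id // (face_finv_phi alphaK sigma_inj face_phi) fx.
    by rewrite l_special // lx (eqP lk) negbK eqxx.
  by rewrite -(on_arc_phi b nsx) f_finv.
have yz : fconnect fp y z by rewrite (same_fconnect_finv phi_inj) -face_fconnect fz fy.
have := back (findex fp y z); rewrite iter_findex // lz => /andP [_].
by case: (b).
Qed.

Lemma weak_labeling_two_orientation (l : D -> bool) :
  weak_labeling s0 s1 l -> two_orientation s0 s1 (vtx_change l).
Proof.
case=> _ G1 /vtx_change_orientationP l_or _; split=> // v v0 v1.
case: (tail_surj v) v0 v1 => d <- d0 d1.
by rewrite -cyclic_nchanges_vertex -two_intervalsE; apply: G1; apply/eqP.
Qed.

Lemma weak_labeling_two_star_orientation (l : D -> bool) :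
  weak_labeling s0 s1 l -> two_star_orientation s0 s1 (face_change l).
Proof.
case=> [[l0 l1] _ /vtx_change_orientationP/(orientation_face_change alphaK sigma_inj) l_or G3].
have face_count d : #|[set y | (face y == face d) && face_change l y]| = 2.
  by rewrite -cyclic_nchanges_face -two_intervalsE.
split=> [|b|f fo]; first exact: l_or.
- have [y [_ fy]] := s0_outer; have := face_count y; rewrite fy card_outer_split.
  have arc_pos c : 0 < #|[set d | on_arc c d && face_change l d]|.
    have [x xc] := exists_face_change_on_arc c l0 l1.
    by apply/card_gt0P; exists x; rewrite inE.
  have -> : #|[set d | dvert s0 s1 d == inr b & face_change l d]| =
            #|[set d | on_arc b d && face_change l d]|.
    by apply: eq_card => d; rewrite !inE dvert_inr.
  by have := arc_pos true; have := arc_pos false; case: (b); lia.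
- case: (face_surj f) fo => d <- fo; rewrite -(face_count d).
  by apply: eq_card => y; rewrite !inE (dvert_inl _ fo).
Qed.

Lemma weak_labeling_inj (l l' : D -> bool) : weak_labeling s0 s1 l -> weak_labeling s0 s1 l' ->
  vtx_change l =1 vtx_change l' -> face_change l =1 face_change l' -> l =1 l'.
Proof.
case=> [[l0 _] _ _ _] [[l0' _] _ _ _] vl fl d.
pose g x := l x (+) l' x.
have g_fs x : g (fs x) = g x.
  by move: (vl x); rewrite /g /vtx_change;
    case: (l x); case: (l' x); case: (l (fs x)); case: (l' (fs x)).
have g_fp x : g (fp x) = g x.
  by move: (fl x); rewrite /g /face_change;
    case: (l x); case: (l' x); case: (l (fp x)); case: (l' (fp x)).
have [z [z0 _]] := s0_outer.
have := finv_invariant_const alphaK sigma_inj dart_connected g_fs g_fp d z.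
by rewrite /g (l0 z z0) (l0' z z0); case: (l d); case: (l' d).
Qed.

(* Both the outdegrees of X and of X* sum to |E|, that is to 2|F|; by Euler's
   formula the ordinary vertices already account for this. *)
Lemma special_outdeg_eq0 (X Xs : D -> bool) :
  two_orientation s0 s1 X -> two_star_orientation s0 s1 Xs -> forall d, special d -> X d = false.
Proof.
case=> X_or X2 [Xs_or Xs1 Xs2] d sd; apply/negbTE/negP => Xd.
have : 0 < #|[set x | (tail x == s0) && X x]| + #|[set x | (tail x == s1) && X x]|.
  have X_tail : 0 < #|[set x | (tail x == tail d) && X x]|.
    by apply/card_gt0P; exists d; rewrite !inE eqxx.
  by case/orP: sd X_tail => /eqP ->; rewrite addn_gt0 => ->; rewrite ?orbT.
have outV : forall v, v \notin [set s0; s1] -> #|[set d | (tail d == v) && X d]| = 2.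
  by move=> v; rewrite !inE negb_or => /andP []; apply: X2.
have := sum_const_except outV; rewrite sum_card_fibers big_setU1 ?inE // big_set1 cards2 s01.
have outF : forall f, f \notin [set outer G] -> #|[set d | (dvert s0 s1 d == inl f) && Xs d]| = 2.
  by move=> f; rewrite inE; apply: Xs2.
have := sum_const_except outF; rewrite big_set1 cards1.
have -> : #|[set d | (dvert s0 s1 d == inl (outer G)) && Xs d]| = 0.
  by apply: eq_card0 => x; rewrite !inE dvert_outer.
have := sum_card_fibers (dvert s0 s1) Xs; rewrite big_sumType big_bool /= !Xs1.
have := card_orientation alphaK X_or; have := card_orientation alphaK Xs_or; have := euler.
move: (#|vtx G|) (#|fce G|) (#|D|) (#|[set x | X x]|) (#|[set x | Xs x]|).
move: (\sum_f _) (#|[set x | (tail x == s0) && X x]|) (#|[set x | (tail x == s1) && X x]|).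
move=> *; lia.
Qed.

Lemma vtx_change_const (l : D -> bool) v : (forall d, tail d = v -> vtx_change l d = false) ->
  forall d d', tail d = v -> tail d' = v -> l d = l d'.
Proof.
move=> no_change d d' dv d'v; have dd' : fconnect (@sigma G) d d'.
  by rewrite -tail_fconnect dv d'v.
rewrite -(iter_findex dd'); elim: (findex _ _ _) => //= k ->.
have xv : tail (iter k (@sigma G) d) = v by rewrite -dv; elim: k => //= k <-; apply: tail_sigma.
have := no_change _ (etrans (tail_sigma _) xv).
by rewrite /vtx_change (finv_f sigma_inj) => /negbFE/eqP.
Qed.

Lemma orientations_coboundary (X Xs : D -> bool) :
  two_orientation s0 s1 X -> two_star_orientation s0 s1 Xs ->
  exists l, X =1 vtx_change l /\ Xs =1 face_change l.
Proof.
move=> X2 Xs2; have X_special := special_outdeg_eq0 X2 Xs2.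
case: (X2) (Xs2) => X_or X_two [Xs_or _ _].
apply: (coboundary_exists alphaK alpha_neq sigma_inj tail_sigma face_phi
  dart_connected tail_surj face_surj euler) => [v|f|d].
- case: (boolP ((v == s0) || (v == s1))) => [sv|]; last first.
    by rewrite negb_or => /andP [v0 v1]; rewrite X_two.
  suff -> : #|[set d | (tail d == v) && X d]| = 0 by [].
  apply: eq_card0 => d; rewrite !inE; apply/andP => -[/eqP dv].
  by rewrite X_special // /special dv.
- by rewrite card_face_two_star.
- by rewrite X_or Xs_or !addbN !addbb.
Qed.

Lemma labeling_of_orientations (X Xs : D -> bool) :
  two_orientation s0 s1 X -> two_star_orientation s0 s1 Xs ->
  exists l : D -> bool, [/\ forall d, tail d = s0 -> l d = false,
    forall d, tail d = s1 -> l d = true, X =1 vtx_change l & Xs =1 face_change l].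
Proof.
move=> X2 Xs2; have X_special := special_outdeg_eq0 X2 Xs2.
have [l0 [X_l0 Xs_l0]] := orientations_coboundary X2 Xs2.
have [[z [z0 _]] [y [y1 _]]] := (s0_outer, s1_outer).
pose l d := l0 d (+) l0 z.
have X_l : X =1 vtx_change l.
  by move=> d; rewrite X_l0 /vtx_change /l; case: (l0 d); case: (l0 (fs d)); case: (l0 z).
have Xs_l : Xs =1 face_change l.
  by move=> d; rewrite Xs_l0 /face_change /l; case: (l0 d); case: (l0 (fp d)); case: (l0 z).
have l_const d d' : special d -> tail d' = tail d -> l d' = l d.
  move=> sd d'd; apply: (vtx_change_const _ d'd erefl) => x xd.
  by rewrite -X_l X_special // /special xd.
have sz : special z by rewrite /special z0 eqxx.
have sy : special y by rewrite /special y1 eqxx orbT.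
have l_s0 d : tail d = s0 -> l d = false.
  by move=> d0; rewrite (l_const z d sz) ?d0 ?z0 // /l addbb.
have l_s1 d : tail d = s1 -> l d = l y by move=> d1; rewrite (l_const y d sy) ?d1.
(* If s1 were labeled 0, the arc A_0 would carry an even number of changes. *)
exists l; split=> // d /l_s1 ->; case ly : (l y) => //.
have l_special x : special x -> l x = false.
  by case/orP => /eqP xs; [apply: l_s0 | rewrite l_s1].
have := even_face_changes_on_arc false l_special.
suff -> : #|[set d | on_arc false d && face_change l d]| = 1 by [].
by rewrite -(card_on_arc_two_star false Xs2); apply: eq_card => x; rewrite !inE Xs_l.
Qed.

Lemma weak_labeling_of_changes (l : D -> bool) :
  (forall d, tail d = s0 -> l d = false) -> (forall d, tail d = s1 -> l d = true) ->
  two_orientation s0 s1 (vtx_change l) -> two_star_orientation s0 s1 (face_change l) ->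
  weak_labeling s0 s1 l.
Proof.
move=> l0 l1 [/vtx_change_orientationP l_or X_two] Xs2; split=> // d.
  move=> d0 d1; rewrite two_intervalsE cyclic_nchanges_vertex.
  by apply: X_two; apply/eqP.
by rewrite two_intervalsE cyclic_nchanges_face card_face_two_star.
Qed.

End PlaneGraph.

Theorem proposition4 (G : pgraph) (s0 s1 : vtx G) :
  is_plane_graph G -> s0 != s1 ->
  (exists d : dart G, tail d = s0 /\ face d = outer G) ->
  (exists d : dart G, tail d = s1 /\ face d = outer G) ->
  exists f : {ffun dart G -> bool} -> {ffun dart G -> bool} * {ffun dart G -> bool},
    [/\ (forall l : {ffun dart G -> bool}, weak_labeling s0 s1 l ->
           two_orientation s0 s1 (f l).1 /\ two_star_orientation s0 s1 (f l).2),
        (forall l l' : {ffun dart G -> bool}, weak_labeling s0 s1 l -> weak_labeling s0 s1 l' ->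
           f l = f l' -> l = l')
      & (forall X Xs : {ffun dart G -> bool},
           two_orientation s0 s1 X -> two_star_orientation s0 s1 Xs ->
           exists2 l : {ffun dart G -> bool}, weak_labeling s0 s1 l & f l = (X, Xs))].
Proof.
move=> HG s01 s0_outer s1_outer.
exists (fun l => ([ffun d => vtx_change l d], [ffun d => face_change l d])).
split=> [l wl | l l' wl wl' [vl fl] | X Xs X2 Xs2].
- split; [apply: eq_two_orientation (weak_labeling_two_orientation HG wl)
         |apply: eq_two_star_orientation
                   (weak_labeling_two_star_orientation HG s01 s0_outer s1_outer wl)];
  by move=> d; rewrite ffunE.
- apply/ffunP/(weak_labeling_inj HG s0_outer wl wl') => d.
    by move/ffunP/(_ d): vl; rewrite !ffunE.
  by move/ffunP/(_ d): fl; rewrite !ffunE.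
- have [l [l0 l1 Xl Xsl]] := labeling_of_orientations HG s01 s0_outer s1_outer X2 Xs2.
  exists [ffun d => l d].
    apply: eq_weak_labeling (weak_labeling_of_changes HG l0 l1 _ _) => [d||].
    - by rewrite ffunE.
    - exact: eq_two_orientation Xl X2.
    - exact: eq_two_star_orientation Xsl Xs2.
  by congr (_, _); apply/ffunP => d; rewrite ffunE ?Xl ?Xsl /vtx_change /face_change !ffunE.
Qed.
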